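(* Let $\mathsf{T}$ be a rooted plane tree with $n\geq 2$ nodes and root $\mathfrak{r}$. Let $C^*\in\mathcal{M}_\mathsf{T}$ be a maximal chain with $|C^*|+f_{C^*}(\mathfrak{r})=\max_{C\in\mathcal{M}_\mathsf{T}}(|C|+f_C(\mathfrak{r}))$, and let $k=f_{C^*}(\mathfrak{r})$. Let $v_0=\mathfrak{r},v_1,\dots,v_{|C^*|-1}$ be the nodes of $C^*$ from top to bottom. For $0\leq i\leq|C^*|-2$, let $B_i=\{u\in\mathsf{T}\setminus C^*:u\leq_\mathsf{T} v_i,\ u\not\leq_\mathsf{T} v_{i+1}\}$. Define a partial order $\sqsubseteq$ on $\mathsf{T}\setminus C^*$ by: for $x\in B_i$, $y\in B_j$, if $i>j$ then $x\sqsubseteq y$; if $i=j$ then $x\sqsubseteq y$ iff $x\geq_\mathsf{T} y$. Let $v_{|C^*|},\dots,v_{|\mathsf{T}|-1}$ be an ordering of $\mathsf{T}\setminus C^*$ such that $a\leq b$ whenever $v_a\sqsubseteq v_b$. Let $\delta^\dagger$ be the ornamentation of $\mathsf{T}$ given by $\delta^\dagger(v_i)=\{v_i,v_{i+1},\dots,v_{|C^*|+k-1-i}\}$ for $0\leq i\leq k$ and $\delta^\dagger(v)=\{v\}$ for $v\notin\{v_0,\dots,v_k\}$. Then for all integers $0\leq i\leq k$ and $p\geq 0$, \[\mathsf{Pop}^p(\delta^\dagger)(v_i)=\{v_i\}\cup\{v_j:i+1\leq j\leq|C^*|+k-1-i-p\}.\]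
   Context: A rooted plane tree $\mathsf{T}$ is a finite tree with a distinguished root $\mathfrak{r}$, regarded as a poset $\leq_\mathsf{T}$ in which $v'\leq_\mathsf{T} v$ iff $v$ lies on the path from $v'$ to $\mathfrak{r}$. $\Delta_\mathsf{T}(v)=\{v':v'\leq_\mathsf{T} v\}$; a leaf is a node covering nothing. $\mathcal{M}_\mathsf{T}$ is the set of maximal chains (leaf-to-root paths). For $C\in\mathcal{M}_\mathsf{T}$ and $v\in C$: $\mathrm{height}_C(v)$ is the number of elements of $C$ strictly below $v$; if $v$ is not a leaf, $\mathrm{ch}_C(v)$ is the element of $C$ covered by $v$; $b_C(v)=|\Delta_\mathsf{T}(v)|-\mathrm{height}_C(v)-1$; $f_C(v)=0$ if $v$ is a leaf, and otherwise with $w=\mathrm{ch}_C(v)$, $f_C(v)=f_C(w)+1$ if $f_C(w)+1\leq b_C(w)$ and $f_C(v)=f_C(w)$ otherwise. An ornament is a nonempty set of nodes inducing a connected subgraph; an ornamentation is a map $\delta$ from nodes to ornaments such that the maximal element of $\delta(v)$ is $v$ and any two sets $\delta(v),\delta(v')$ are nested or disjoint. $\mathcal{O}(\mathsf{T})$ is the set of ornamentations ordered by pointwise inclusion (a lattice with meet given by pointwise intersection), and $\mathsf{Pop}(\delta)=\bigwedge(\{\delta\}\cup\{\delta':\delta'\lessdot\delta\})$; $\mathsf{Pop}^p$ is the $p$-th iterate. *)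

From mathcomp Require Import all_boot.
Set Implicit Arguments. Unset Strict Implicit. Unset Printing Implicit Defensive.

(* The plane (children ordering) structure plays no role in the statement. *)
Definition rooted_tree (V : finType) (r : V) (par : V -> V) : Prop :=
  par r = r /\ forall x : V, exists k, iter k par x = r.

Section Tree.
Variables (V : finType) (r : V) (par : V -> V).

(* u <=_T v : v lies on the path from u to the root *)
Definition anc (u v : V) : bool := [exists k : 'I_#|V|.+1, iter k par u == v].

Definition covers (v u : V) : bool := (u != r) && (par u == v).

Definition Delta (v : V) : {set V} := [set u | anc u v].

Definition leaf (l : V) : bool := [forall u, ~~ covers l u].

Definition maxchain (C : {set V}) : Prop :=
  exists l, leaf l /\ C = [set u | anc l u].

Definition heightC (C : {set V}) (v : V) : nat :=
  #|[set u in C | anc u v && (u != v)]|.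

Definition bC (C : {set V}) (v : V) : nat := #|Delta v| - heightC C v - 1.

Definition chC (C : {set V}) (v : V) : option V := [pick w in C | covers v w].

(* f_C, by recursion down the chain (fuel bounded by #|V|, more than any height) *)
Fixpoint fC_fuel (C : {set V}) (fuel : nat) (v : V) : nat :=
  match fuel with
  | 0 => 0
  | m.+1 =>
    match chC C v with
    | None => 0
    | Some w => let a := fC_fuel C m w in if a.+1 <= bC C w then a.+1 else a
    end
  end.

Definition fC (C : {set V}) (v : V) : nat := fC_fuel C #|V| v.

Definition tree_edge (S : {set V}) : rel V :=
  fun x y => [&& x \in S, y \in S & covers x y || covers y x].

Definition connectedS (S : {set V}) : bool :=
  [forall x in S, forall y in S, connect (tree_edge S) x y].

Definition ornament (S : {set V}) : bool := (S != set0) && connectedS S.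

Definition ornamentation (d : {ffun V -> {set V}}) : bool :=
  [forall v, [&& ornament (d v), v \in d v & [forall u in d v, anc u v]]] &&
  [forall v, forall w,
     [|| d v \subset d w, d w \subset d v | [disjoint d v & d w]]].

Definition orn_le (d1 d2 : {ffun V -> {set V}}) : bool :=
  [forall v, d1 v \subset d2 v].

Definition orn_lt (d1 d2 : {ffun V -> {set V}}) : bool :=
  orn_le d1 d2 && (d1 != d2).

Definition orn_covby (d' d : {ffun V -> {set V}}) : bool :=
  [&& ornamentation d', ornamentation d, orn_lt d' d &
      ~~ [exists e, [&& ornamentation e, orn_lt d' e & orn_lt e d]]].

(* Pop: meet (= pointwise intersection) of d and all elements it covers *)
Definition Pop (d : {ffun V -> {set V}}) : {ffun V -> {set V}} :=
  [ffun v => d v :&: \bigcap_(d' | orn_covby d' d) d' v].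

End Tree.

Definition Bset (V : finType) (par : V -> V) (Cs : {set V}) (v : nat -> V) (i : nat)
  : {set V} :=
  [set u | [&& u \notin Cs, anc par u (v i) & ~~ anc par u (v i.+1)]].

From mathcomp Require Import all_boot zify.
Set Implicit Arguments. Unset Strict Implicit. Unset Printing Implicit Defensive.

(* Write delta t for the ornamentation sending v_i (i <= k) to the segment
   {v_i, v_(i+1), ..., v_(t i)} of the ordering v, and every other node u to {u}. Then
   dagger = delta (seg_end 0) with seg_end p i = m + k - 1 - i - p, and Pop maps
   delta (seg_end p) to delta (seg_end p.+1).
   Since f_{C*}(r) = k, at least k - i off-chain nodes lie below v_(i+1), and the linear
   extension lists all of them before any off-chain node not below v_(i+1). Hence every
   off-chain v_a with a + i < m + k lies below v_(i+1), the parent of each node of a segment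
   is an earlier node of the same segment, and delta t is an ornamentation.
   The ornamentations covered by delta (seg_end p) are exactly those obtained by removing
   the last node of one non-trivial segment: an ornamentation below delta (seg_end p) that
   keeps every last node contains all of delta (seg_end p), because ornaments are convex
   along tree paths. So Pop removes all the last nodes at once. *)

Lemma exists_crossing (P : pred nat) i j : P i -> ~~ P j -> i < j ->
  exists l, [/\ i <= l, l < j, P l & ~~ P l.+1].
Proof.
move=> Pi; elim: j => [|j IHj] // nPj1 lt_ij.
case Pj: (P j); first by exists j; split; rewrite // -ltnS.
have lt_ij' : i < j by rewrite ltn_neqAle -ltnS lt_ij andbT; apply: contraFneq Pj => <-.
by have [l [? ? ? ?]] := IHj (negbT Pj) lt_ij'; exists l; split; rewrite // ltnW.
Qed.

Lemma inj_onto_card (T : finType) (A : {set T}) (f : nat -> T) N :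
    (forall a b, a < N -> b < N -> f a = f b -> a = b) ->
    (forall a, a < N -> f a \in A) -> #|A| <= N ->
  forall u, u \in A -> exists2 a, a < N & u = f a.
Proof.
move=> f_inj fA cardA u Au.
have f_inj' : injective (fun a : 'I_N => f a).
  by move=> a b /(f_inj _ _ (ltn_ord a) (ltn_ord b))/val_inj.
have imA : [set f (val a) | a : 'I_N] = A.
  apply/eqP; rewrite eqEcard card_imset // card_ord cardA andbT.
  by apply/subsetP => _ /imsetP [a _ ->]; apply: fA (ltn_ord a).
by move: Au; rewrite -imA => /imsetP [a _ ->]; exists a.
Qed.

(** * Rooted trees and ornamentations *)

Section RootedTree.
Variables (V : finType) (r : V) (par : V -> V).

Definition laminar (A B : {set V}) := [|| A \subset B, B \subset A | [disjoint A & B]].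

Lemma laminarC A B : laminar A B = laminar B A.
Proof. by rewrite /laminar disjoint_sym orbA (orbC (A \subset B)) -orbA. Qed.

Lemma laminar_set1 A u : laminar A [set u].
Proof.
rewrite /laminar; case Au: (u \in A); first by rewrite sub1set Au orbT.
by rewrite disjoint_sym disjoints1 Au !orbT.
Qed.

Lemma tree_edge_sym S : symmetric (tree_edge r par S).
Proof. by move=> x y; rewrite /tree_edge andbCA orbC. Qed.

Lemma bC_le_card_off C u : bC par C u <= #|Delta par u :\: C|.
Proof.
rewrite /bC /heightC; set S := [set w in C | _].
have sub : Delta par u :&: C \subset u |: S.
  by apply/subsetP => w; rewrite !inE; case: eqP => //= _ /andP [-> ->].
have := subset_leq_card sub; rewrite cardsU1; have := cardsID C (Delta par u).
by case: (u \notin S) => /=; lia.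
Qed.

Lemma anc_refl x : anc par x x.
Proof. by apply/existsP; exists ord0. Qed.

Hypothesis tree : rooted_tree r par.

Lemma iter_par_root j : iter j par r = r.
Proof. by case: tree => par_r _; elim: j => //= j ->. Qed.

Lemma iter_par_root_ge x K N : iter K par x = r -> K <= N -> iter N par x = r.
Proof. by move=> xK /subnK <-; rewrite iterD xK iter_par_root. Qed.

Lemma iter_par_loop x a b : a < b -> iter a par x = iter b par x -> iter a par x = r.
Proof.
move=> lt_ab loop.
have periodic s : iter (s * (b - a) + a) par x = iter a par x.
  elim: s => // s IHs; rewrite mulSn -addnA iterD IHs -iterD subnK //.
  exact: ltnW.
case: tree => _ /(_ x) [K xK]; rewrite -(periodic K).
by apply: iter_par_root_ge xK _; rewrite (leq_trans _ (leq_addr a _)) // leq_pmulr // subn_gt0.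
Qed.

Lemma iter_par_card x : iter #|V| par x = r.
Proof.
pose f (a : 'I_#|V|.+1) := iter a par x.
have /injectivePn [a [b neq_ab fab]] : ~~ injectiveb f.
  by apply/injectiveP => /leq_card; rewrite card_ord ltnn.
have bounded (c : 'I_#|V|.+1) : c <= #|V| by rewrite -ltnS.
case: (ltngtP a b) => [lt_ab|lt_ba|/val_inj eq_ab]; last by rewrite eq_ab eqxx in neq_ab.
- exact: iter_par_root_ge (iter_par_loop lt_ab fab) (bounded a).
- exact: iter_par_root_ge (iter_par_loop lt_ba (esym fab)) (bounded b).
Qed.

Lemma ancP x y : reflect (exists K, iter K par x = y) (anc par x y).
Proof.
apply: (iffP existsP) => [[K /eqP xK]|[K xK]]; first by exists K.
have [lt_K|le_K] := ltnP K #|V|.+1; first by exists (Ordinal lt_K); apply/eqP.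
exists ord_max; apply/eqP; rewrite /= -xK iter_par_card.
by rewrite (iter_par_root_ge (iter_par_card x)) // ltnW.
Qed.

Lemma anc_par x : anc par x (par x).
Proof. by apply/ancP; exists 1. Qed.

Lemma anc_trans x y z : anc par x y -> anc par y z -> anc par x z.
Proof. by move=> /ancP [a <-] /ancP [b <-]; apply/ancP; exists (b + a); rewrite iterD. Qed.

Lemma anc_root x : anc par x r.
Proof. by case: tree => _ /(_ x) [K xK]; apply/ancP; exists K. Qed.

Lemma anc_antisym x y : anc par x y -> anc par y x -> x = y.
Proof.
move=> /ancP [a xa] /ancP [b yb].
have [/eqP|pos_ab] := posnP (a + b); first by rewrite addn_eq0 => /andP [/eqP a0 _]; rewrite -xa a0.
have loop : iter 0 par x = iter (a + b) par x by rewrite addnC iterD xa yb.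
have /= x_r := iter_par_loop pos_ab loop.
by rewrite -xa x_r iter_par_root.
Qed.

Lemma par_fixed x : par x = x -> x = r.
Proof. by move=> px; case: tree => _ /(_ x) [K <-]; elim: K => //= K <-. Qed.

Lemma anc_par_neq x z : anc par x z -> x != z -> anc par (par x) z.
Proof.
move=> /ancP [[|K] xK] neq_xz; first by rewrite -xK eqxx in neq_xz.
by apply/ancP; exists K; rewrite -iterSr.
Qed.

Lemma child_on_path x w : anc par x w -> x != w ->
  exists c, [/\ par c = w, c != w & anc par x c].
Proof.
move=> /ancP [a]; elim: a x => [|a IHa] x xa neq_xw; first by rewrite -xa eqxx in neq_xw.
rewrite iterSr in xa; have [pxw|] := eqVneq (par x) w; first by exists x; split; rewrite ?anc_refl.
move=> /(IHa _ xa) [c [pc neq_cw pxc]].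
by exists c; split => //; apply: anc_trans pxc; apply: anc_par.
Qed.

Lemma covers_par c : par c != c -> covers r par (par c) c.
Proof.
case: tree => par_r _ neq_pc; rewrite /covers eqxx andbT.
by apply: contraNneq neq_pc => ->; rewrite par_r.
Qed.

Lemma leaf_anc l x : leaf r par l -> anc par x l -> x = l.
Proof.
move=> /forallP leaf_l xl; apply/eqP/contraT => /(child_on_path xl) [c [pc neq_cl _]].
by have := leaf_l c; rewrite -pc covers_par // pc eq_sym.
Qed.

Lemma anc_connect (S : {set V}) z x y : z \notin S ->
  connect (tree_edge r par S) x y -> anc par x z = anc par y z.
Proof.
move=> zS; have step a b : tree_edge r par S a b -> anc par a z = anc par b z.
  move=> /and3P [aS bS cov].
  wlog /andP [_ /eqP pba] : a b aS bS {cov} / covers r par a b.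
    by move=> sym; case/orP: cov => [/(sym a b aS bS) | /(sym b a bS aS)] ->.
  apply/idP/idP => [az|bz]; first by rewrite -pba in az; apply: anc_trans (anc_par b) az.
  by rewrite -pba; apply: anc_par_neq bz _; apply: contraNneq zS => <-.
exact: (@closed_connect _ _ (fun u => anc par u z) step).
Qed.

Section Ornamentation.
Variable d : {ffun V -> {set V}}.

Lemma ornamentation_intro :
    (forall w, w \in d w) -> (forall w x, x \in d w -> anc par x w) ->
    (forall w x, x \in d w -> connect (tree_edge r par (d w)) w x) ->
    (forall w w', laminar (d w) (d w')) ->
  ornamentation r par d.
Proof.
move=> self below conn lam; apply/andP; split; apply/forallP => w; last first.
  by apply/forallP => w'; apply: lam.
apply/and3P; split; [apply/andP; split | exact: self | exact/forall_inP/below].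
  by apply/set0Pn; exists w.
apply/forall_inP => x dx; apply/forall_inP => y dy; apply: connect_trans (conn _ _ dy).
by rewrite (sym_connect_sym (tree_edge_sym _)) conn.
Qed.

Hypothesis orn_d : ornamentation r par d.

Lemma orn_mem_self w : w \in d w.
Proof. by case/andP: orn_d => /forallP /(_ w) /and3P []. Qed.

Lemma orn_anc w x : x \in d w -> anc par x w.
Proof. by move=> dx; case/andP: orn_d => /forallP /(_ w) /and3P [_ _ /forall_inP /(_ x dx)]. Qed.

Lemma orn_connect w x y : x \in d w -> y \in d w -> connect (tree_edge r par (d w)) x y.
Proof.
case/andP: orn_d => /forallP /(_ w) /and3P [/andP [_ /forall_inP conn] _ _] _ dx dy.
by move/forall_inP: (conn x dx) => /(_ y dy).
Qed.

Lemma orn_laminar w w' : laminar (d w) (d w').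
Proof. by case/andP: orn_d => _ /forallP /(_ w) /forallP /(_ w'). Qed.

Lemma orn_mem_sep w x z : x \in d w -> anc par x z -> ~~ anc par w z -> z \in d w.
Proof.
move=> dx xz wz; apply: contraT => zd.
by move: wz; rewrite -(anc_connect zd (orn_connect dx (orn_mem_self w))) xz.
Qed.

Lemma orn_sub_of_mem w w' : w' \in d w -> d w' \subset d w.
Proof.
move=> dw'; case/or3P: (orn_laminar w' w) => // [sub|dis].
  by rewrite (anc_antisym (orn_anc dw') (orn_anc (subsetP sub _ (orn_mem_self w)))).
by rewrite (disjointFr dis (orn_mem_self w')) in dw'.
Qed.

End Ornamentation.

End RootedTree.

(** * The chain C* and f_{C*} *)

Section Spine.
Variables (V : finType) (r : V) (par : V -> V).
Hypothesis tree : rooted_tree r par.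
Hypothesis card_V : 2 <= #|V|.
Variable Cs : {set V}.
Hypothesis Cs_max : maxchain r par Cs.
Variable v : nat -> V.
Hypothesis v_inj : forall a b, a < #|V| -> b < #|V| -> v a = v b -> a = b.
Hypothesis v0 : v 0 = r.
Hypothesis v_Cs : forall i, i < #|Cs| -> v i \in Cs.
Hypothesis v_par : forall i, i.+1 < #|Cs| -> par (v i.+1) = v i.
Hypothesis v_linext : forall a b i j,
  #|Cs| <= a < #|V| -> #|Cs| <= b < #|V| ->
  i.+1 < #|Cs| -> j.+1 < #|Cs| ->
  v a \in Bset par Cs v i -> v b \in Bset par Cs v j ->
  (j < i) || ((i == j) && anc par (v b) (v a)) ->
  a <= b.

Local Notation n := #|V|.
Local Notation m := #|Cs|.
Local Notation k := (fC r par Cs r).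

Lemma eq_v a b : a < n -> b < n -> (v a == v b) = (a == b).
Proof. by move=> an bn; apply/eqP/eqP => [|->] //; apply: v_inj. Qed.

Lemma m_le_n : m <= n.
Proof. exact: max_card. Qed.

Lemma v_onto u : exists2 a, a < n & u = v a.
Proof. by apply: (inj_onto_card (A := setT)); rewrite ?cardsT ?inE. Qed.

Lemma v_onto_Cs u : u \in Cs -> exists2 i, i < m & u = v i.
Proof.
have v_inj_m a b : a < m -> b < m -> v a = v b -> a = b.
  by move=> am bm; apply: v_inj; apply: leq_trans m_le_n.
exact: inj_onto_card v_inj_m v_Cs (leqnn _) u.
Qed.

Lemma mem_Cs a : a < n -> (v a \in Cs) = (a < m).
Proof.
move=> an; apply/idP/idP => [/v_onto_Cs [i im /v_inj -> //]|/v_Cs //].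
exact: leq_trans im m_le_n.
Qed.

Lemma iter_par_spine d j : d <= j -> j < m -> iter d par (v j) = v (j - d).
Proof.
elim: d j => [|d IHd] j dj jm; first by rewrite subn0.
case: j dj jm => // j dj jm.
by rewrite iterSr v_par // IHd // ltnW.
Qed.

Lemma anc_spine i j : i < m -> j < m -> anc par (v j) (v i) = (i <= j).
Proof.
move=> im jm; have le_anc a b : a <= b -> b < m -> anc par (v b) (v a).
  by move=> ab bm; apply/(ancP tree); exists (b - a); rewrite iter_par_spine ?leq_subr ?subKn.
apply/idP/idP => [ji|ij]; last exact: le_anc.
rewrite leqNgt; apply/negP => lt_ji.
have := anc_antisym tree ji (le_anc _ _ (ltnW lt_ji) im).
move/v_inj => /(_ (leq_trans jm m_le_n) (leq_trans im m_le_n)) eq_ji.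
by rewrite eq_ji ltnn in lt_ji.
Qed.

Lemma two_le_m : 2 <= m.
Proof.
have [l [leaf_l Cs_l]] := Cs_max.
have neq_lr : l != r.
  apply: contraTneq card_V => l_r; rewrite -ltnNge ltnS -(cards1 r) -cardsT.
  apply/subset_leq_card/subsetP => x _; rewrite inE; apply: contraT => neq_xr.
  have [c [pc neq_cr _]] := child_on_path tree (anc_root tree x) neq_xr.
  by move/forallP: leaf_l => /(_ c); rewrite l_r -{2}pc covers_par // pc eq_sym.
have : [set l; r] \subset Cs.
  apply/subsetP => x; rewrite !inE Cs_l inE => /orP [] /eqP ->; first exact: anc_refl.
  exact: (anc_root tree l).
by move/subset_leq_card; rewrite cards2 neq_lr.
Qed.

Lemma leaf_spine_last : leaf r par (v m.-1).
Proof.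
have [l [leaf_l Cs_l]] := Cs_max.
have [j jm lj] : exists2 j, j < m & l = v j by apply: v_onto_Cs; rewrite Cs_l inE anc_refl.
have lastm : m.-1 < m by rewrite ltn_predL (leq_ltn_trans _ jm).
have := v_Cs lastm; rewrite {2}Cs_l inE => l_last.
have last_l : anc par (v m.-1) l by rewrite lj anc_spine // -ltnS (ltn_predK jm).
by rewrite -(anc_antisym tree l_last last_l).
Qed.

Lemma not_anc_spine_last x : x \notin Cs -> ~~ anc par x (v m.-1).
Proof.
apply: contra => /(leaf_anc tree leaf_spine_last) ->; apply: v_Cs.
by rewrite ltn_predL (leq_trans _ two_le_m).
Qed.

(* f_{C*}(v_i), computed with exactly the fuel it needs *)
Definition fspine i := fC_fuel r par Cs (m.-1 - i) (v i).

Definition off_below j := #|Delta par (v j) :\: Cs|.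

Lemma covers_spine i c : i < m -> c < m -> covers r par (v i) (v c) -> c = i.+1.
Proof.
move=> im cm /andP [neq_cr /eqP pc]; case: c => [|c] in cm neq_cr pc *.
  by rewrite v0 eqxx in neq_cr.
rewrite v_par // in pc; congr _.+1; apply: v_inj pc; apply: leq_trans m_le_n; lia.
Qed.

Lemma chC_spine i : i.+1 < m -> chC r par Cs (v i) = Some (v i.+1).
Proof.
move=> im; rewrite /chC; case: pickP => [w /andP [Cw cov]|none].
  by have [c cm wc] := v_onto_Cs Cw; rewrite wc (@covers_spine i c) -?wc // ltnW.
have := none (v i.+1); rewrite v_Cs // /covers v_par // eqxx andbT -v0 eq_v //.
all: have := m_le_n; lia.
Qed.

Lemma chC_spine_last : chC r par Cs (v m.-1) = None.
Proof.
rewrite /chC; case: pickP => // w /andP [Cw cov].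
have [c cm wc] := v_onto_Cs Cw; rewrite wc in cov.
have := covers_spine _ cm cov; have := two_le_m; lia.
Qed.

Lemma fC_fuel_spine fuel i : i < m -> m.-1 - i <= fuel ->
  fC_fuel r par Cs fuel (v i) = fspine i.
Proof.
rewrite /fspine; elim: fuel i => [|fuel IHf] i im fuel_i; first by rewrite (_ : _ - i = 0) //; lia.
have [i_last|lt_i] := eqVneq i m.-1.
  by rewrite i_last subnn /= chC_spine_last.
have -> : m.-1 - i = (m.-1 - i.+1).+1 by lia.
by rewrite /= chC_spine ?IHf //; lia.
Qed.

Lemma fC_root : k = fspine 0.
Proof.
rewrite /fC -{2}v0 fC_fuel_spine ?subn0 //; have := two_le_m; have := m_le_n; lia.
Qed.

Lemma fspine_rec i : i.+1 < m ->
  fspine i = if (fspine i.+1).+1 <= bC par Cs (v i.+1) then (fspine i.+1).+1 else fspine i.+1.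
Proof.
by move=> im; rewrite {1}/fspine (_ : _ - i = (m.-1 - i.+1).+1) /= ?chC_spine //; lia.
Qed.

Lemma fspine_last : fspine m.-1 = 0.
Proof. by rewrite /fspine subnn. Qed.

Lemma off_below_succ j : j.+1 < m -> off_below j.+1 <= off_below j.
Proof.
move=> jm; apply/subset_leq_card/setSD/subsetP => x; rewrite !inE => /(anc_trans tree); apply.
by rewrite anc_spine // ltnW.
Qed.

Lemma off_below_last : off_below m.-1 = 0.
Proof.
apply/eqP; rewrite cards_eq0; apply/eqP/setP => x; rewrite !inE.
by apply/negbTE/andP => -[/not_anc_spine_last/negP].
Qed.

Lemma fspine_le_off_below i : i.+1 < m -> fspine i <= off_below i.+1.
Proof.
move Ed : (m.-2 - i) => d; elim: d i Ed => [|d IHd] i Ed im; rewrite fspine_rec //.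
all: case: ifP => [le|_]; first exact: leq_trans le (bC_le_card_off par _ _).
- by rewrite (_ : i.+1 = m.-1) ?fspine_last //; lia.
- by apply: leq_trans (IHd i.+1 _ _) (off_below_succ _); lia.
Qed.

Lemma k_le_fspine i : i < m -> k <= fspine i + i.
Proof.
elim: i => [|i IHi] im; first by rewrite fC_root addn0.
have := IHi (ltnW im); rewrite fspine_rec //; case: ifP => _; lia.
Qed.

Lemma k_lt_m : k.+1 < m.
Proof.
have m2 := two_le_m; have m2m : m.-2 < m by lia.
have := k_le_fspine m2m; have := fspine_le_off_below (_ : m.-2.+1 < m).
by rewrite (_ : m.-2.+1 = m.-1) ?off_below_last; lia.
Qed.

Lemma off_below_ge i : i < k -> k - i <= off_below i.+1.
Proof.
move=> ik; have km := k_lt_m; have im : i.+1 < m by lia.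
by have := k_le_fspine (ltnW im); have := fspine_le_off_below im; lia.
Qed.

Lemma m_k_le_n : m + k <= n.
Proof.
have [->|k_pos] := posnP k; first by rewrite addn0 m_le_n.
have := off_below_ge k_pos; rewrite subn0 => k_off.
have : off_below 1 <= #|~: Cs| by apply/subset_leq_card/subsetP => x; rewrite !inE => /andP [].
by rewrite cardsCs setCK; lia.
Qed.

Lemma Bset_of_anc u j0 : u \notin Cs -> anc par u (v j0) -> j0 < m ->
  exists j, [/\ j0 <= j, j.+1 < m & u \in Bset par Cs v j].
Proof.
move=> uC uj0 j0m; have nu_last := not_anc_spine_last uC.
have j0_last : j0 < m.-1.
  by rewrite ltn_neqAle -ltnS (ltn_predK j0m) j0m andbT; apply: contraNneq nu_last => <-.
have [j [j0j j_last uj nuj]] := exists_crossing (P := fun j => anc par u (v j)) uj0 nu_last j0_last.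
by exists j; split; rewrite ?inE ?uC ?uj ?nuj //; lia.
Qed.

Lemma Bset_of_not_anc u i : u \notin Cs -> ~~ anc par u (v i.+1) ->
  exists j, j <= i /\ u \in Bset par Cs v j.
Proof.
move=> uC nui; have u0 : anc par u (v 0) by rewrite v0 anc_root.
have [j [_ ji uj nuj]] := exists_crossing (P := fun j => anc par u (v j)) u0 nui (ltn0Sn i).
by exists j; rewrite inE uC uj nuj.
Qed.

Lemma off_below_le_index a i j : m <= a < n -> j <= i -> i.+1 < m ->
  v a \in Bset par Cs v j -> ~~ anc par (v a) (v i.+1) -> off_below i.+1 <= a - m.
Proof.
move=> /andP [ma an] ji im Ba na.
have sub : Delta par (v i.+1) :\: Cs \subset [set v (m + val b) | b : 'I_(a - m)].
  apply/subsetP => x; rewrite !inE => /andP [xC xi]; have [b bn xb] := v_onto x; subst x.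
  have mb : m <= b by rewrite leqNgt -mem_Cs.
  have [j' [ij' j'm Bb]] := Bset_of_anc xC xi im.
  have ba : b <= a.
    by apply: (v_linext (b := a) _ _ j'm _ Bb Ba); rewrite ?mb ?ma ?bn ?an //; lia.
  have neq_ba : b != a by apply: contraNneq na => <-.
  have lt_ba : b - m < a - m by lia.
  by apply/imsetP; exists (Ordinal lt_ba); rewrite //= subnKC.
by have := leq_trans (subset_leq_card sub) (leq_imset_card _ _); rewrite card_ord.
Qed.

Lemma low_index_anc_spine a i : m <= a -> a + i < m + k -> anc par (v a) (v i.+1).
Proof.
move=> ma aik; have an : a < n by have := m_k_le_n; lia.
have ik : i < k by lia.
have im : i.+1 < m by have := k_lt_m; lia.
apply: contraT => na; have aC : v a \notin Cs by rewrite mem_Cs // -leqNgt.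
have [j [ji Ba]] := Bset_of_not_anc aC na.
have := off_below_le_index (_ : m <= a < n) ji im Ba na; rewrite ?ma ?an //.
by have := off_below_ge ik; lia.
Qed.

Lemma par_Bset a j : m <= a < n -> j.+1 < m -> v a \in Bset par Cs v j ->
  par (v a) = v j \/ exists2 b, m <= b < a & par (v a) = v b.
Proof.
move=> /andP [ma an] jm Ba; have := Ba; rewrite inE => /and3P [aC aj naj1].
have [|neq_pj] := eqVneq (par (v a)) (v j); [by left | right].
have neq_aj : v a != v j by apply: contraNneq aC => ->; rewrite v_Cs // ltnW.
have pj : anc par (par (v a)) (v j) := anc_par_neq tree aj neq_aj.
have npj1 : ~~ anc par (par (v a)) (v j.+1).
  by apply: contra naj1; apply: (anc_trans tree (anc_par tree _)).
have pC : par (v a) \notin Cs.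
  apply: contra neq_pj => /v_onto_Cs [c cm pc].
  rewrite pc !anc_spine ?(ltnW jm) // in pj npj1 *; apply/eqP; congr v; lia.
have [b bn pb] := v_onto (par (v a)); rewrite pb in pC.
have mb : m <= b by rewrite leqNgt -mem_Cs.
have ba : b <= a.
  apply: (v_linext _ _ jm jm (_ : v b \in Bset par Cs v j) Ba).
  - by rewrite mb bn.
  - by rewrite ma an.
  - by rewrite inE pC -pb pj npj1.
  - by rewrite eqxx -pb (anc_par tree) orbT.
have neq_ba : b != a.
  apply: contraNneq aC => eq_ba; rewrite (par_fixed tree (_ : par (v a) = v a)) -?v0 ?v_Cs //.
    exact: leq_trans two_le_m.
  by rewrite pb eq_ba.
by exists b; rewrite // mb ltn_neqAle neq_ba ba.
Qed.

(** * Segment ornamentations *)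

Definition delta (t : nat -> nat) : {ffun V -> {set V}} :=
  [ffun u => [set x | (x == u) || [exists i : 'I_k.+1, exists j : 'I_n,
                [&& v i == u, x == v j & i < j <= t i]]]].

Lemma top_spineP w : (exists2 i, i <= k & w = v i) \/ (forall i, i <= k -> v i != w).
Proof.
have [/existsP [i /eqP <-]|none] := boolP [exists i : 'I_k.+1, v i == w].
  by left; exists i => //; rewrite -ltnS; exact: ltn_ord.
right => i ik; apply: contraNneq none => <-; rewrite -ltnS in ik.
by apply/existsP; exists (Ordinal ik).
Qed.

Lemma top_lt_n i : i <= k -> i < n.
Proof. by have := k_lt_m; have := m_le_n; lia. Qed.

Lemma mem_delta t i a : i <= k -> a < n ->
  (v a \in delta t (v i)) = (a == i) || (i < a <= t i).
Proof.
move=> ik an; have i_n := top_lt_n ik.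
rewrite ffunE inE eq_v //; congr orb; apply/existsP/idP.
  case=> i' /existsP [j /and3P [/eqP vi' /eqP vj]].
  have i'k : i' <= k by rewrite -ltnS; exact: ltn_ord.
  by rewrite -(v_inj (top_lt_n i'k) i_n vi') (v_inj an (ltn_ord j) vj).
rewrite -ltnS in ik; exists (Ordinal ik); apply/existsP; exists (Ordinal an).
by rewrite !eqxx.
Qed.

Lemma delta_off t u : (forall i, i <= k -> v i != u) -> delta t u = [set u].
Proof.
move=> off; apply/setP => x; rewrite ffunE !inE; case: (x == u) => //=.
apply/negbTE/existsP => -[i /existsP [j /and3P [/eqP vi _ _]]].
have ik : i <= k by rewrite -ltnS; exact: ltn_ord.
by move: (off i ik); rewrite vi eqxx.
Qed.

Lemma delta_refl t w : w \in delta t w.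
Proof. by rewrite ffunE inE eqxx. Qed.

Lemma delta_mono t t' w : (forall i, i <= k -> t i <= t' i) -> delta t w \subset delta t' w.
Proof.
move=> le_t; apply/subsetP => x; rewrite !ffunE !inE.
case/orP => [->//|/existsP [i /existsP [j /and3P [vi xj /andP [ij jt]]]]].
apply/orP; right; apply/existsP; exists i; apply/existsP; exists j.
by rewrite vi xj ij (leq_trans jt) // le_t // -ltnS.
Qed.

Section Admissible.
Variable t : nat -> nat.
Hypothesis t_bound : forall i, i <= k -> t i + i < m + k.
Hypothesis t_anti : forall i i', i <= i' <= k -> t i' <= t i.

Lemma par_in_delta i j : i <= k -> j < n -> v j \in delta t (v i) -> j != i ->
  exists b, [/\ b < j, v b \in delta t (v i) & par (v j) = v b].
Proof.
move=> ik jn; rewrite mem_delta // => /orP [/eqP ->|/andP [ij jt]]; first by rewrite eqxx.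
move=> _; have tik := t_bound ik; have km := k_lt_m.
have [jm|mj] := ltnP j m.
  exists j.-1; split; [lia | rewrite mem_delta //; lia |].
  by rewrite -{1}(prednK (leq_ltn_trans (leq0n i) ij)) v_par // prednK //; lia.
have jC : v j \notin Cs by rewrite mem_Cs // -leqNgt.
have im : i.+1 < m by lia.
have ji : j + i < m + k by lia.
have [j' [ij' j'm Bj]] := Bset_of_anc jC (low_index_anc_spine mj ji) im.
have mjn : m <= j < n by rewrite mj jn.
have [pj|[b /andP [mb bj] pb]] := par_Bset mjn j'm Bj.
  by exists j'; split; rewrite ?mem_delta ?pj //; lia.
by exists b; split; rewrite ?mem_delta ?pb //; lia.
Qed.

Lemma connect_delta i j : i <= k -> j < n -> v j \in delta t (v i) ->
  connect (tree_edge r par (delta t (v i))) (v i) (v j).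
Proof.
move=> ik; elim/ltn_ind: j => j IHj jn dj.
have [->|ji] := eqVneq j i; first exact: connect0.
have [b [bj db pj]] := par_in_delta ik jn dj ji.
apply: connect_trans (IHj b bj (ltn_trans bj jn) db) (connect1 _).
rewrite /tree_edge db dj -pj covers_par // pj eq_v ?(ltn_trans bj jn) //.
by rewrite neq_ltn bj.
Qed.

Lemma anc_delta i j : i <= k -> j < n -> v j \in delta t (v i) -> anc par (v j) (v i).
Proof.
move=> ik; elim/ltn_ind: j => j IHj jn dj.
have [->|ji] := eqVneq j i; first exact: anc_refl.
have [b [bj db pj]] := par_in_delta ik jn dj ji.
by apply: (anc_trans tree (anc_par tree _)); rewrite pj IHj // (ltn_trans bj jn).
Qed.

Lemma laminar_delta i i' : i <= i' <= k -> laminar (delta t (v i)) (delta t (v i')).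
Proof.
move=> /andP [ii' i'k]; have ik : i <= k by apply: leq_trans i'k.
have t_ii' : t i' <= t i by apply: t_anti; rewrite ii' i'k.
have [i'_in|i'_out] := boolP ((i' == i) || (i' <= t i)).
  apply/or3P/Or32/subsetP => x; have [a an ->] := v_onto x.
  by rewrite !mem_delta //; lia.
apply/or3P/Or33; rewrite disjoint_subset; apply/subsetP => x; have [a an ->] := v_onto x.
by rewrite inE !mem_delta //; lia.
Qed.

Lemma delta_ornamentation : ornamentation r par (delta t).
Proof.
apply: ornamentation_intro => [w|w x|w x|w w']; first exact: delta_refl.
- have [[i ik ->]|off] := top_spineP w.
    by have [a an ->] := v_onto x; apply: anc_delta.
  by rewrite delta_off // inE => /eqP ->; apply: anc_refl.
- have [[i ik ->]|off] := top_spineP w; last by rewrite delta_off // inE => /eqP ->.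
  by have [a an ->] := v_onto x; apply: connect_delta.
- have [[i ik ->]|off] := top_spineP w; last by rewrite delta_off // laminarC laminar_set1.
  have [[i' i'k ->]|off'] := top_spineP w'; last by rewrite (delta_off _ off') laminar_set1.
  have [ii'|i'i] := leqP i i'; first by apply: laminar_delta; rewrite ii'.
  by rewrite laminarC; apply: laminar_delta; rewrite ltnW.
Qed.

End Admissible.

(** * Pop on segment ornamentations *)

Definition seg_end p i := m + k - 1 - i - p.

Definition drop_end (t : nat -> nat) i0 i := if i == i0 then (t i).-1 else t i.

Lemma delta_seg_end_orn p : ornamentation r par (delta (seg_end p)).
Proof. by apply: delta_ornamentation => [i|i i'] le_i; rewrite /seg_end; have := two_le_m; lia. Qed.

Lemma delta_drop_end_orn p i0 : ornamentation r par (delta (drop_end (seg_end p) i0)).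
Proof.
apply: delta_ornamentation => [i|i i'] le_i; rewrite /drop_end /seg_end; have := two_le_m.
  by case: eqP; lia.
by case: eqP; case: eqP; lia.
Qed.

Lemma mem_delta_drop t i0 a : i0 <= k -> a < n -> i0 < t i0 ->
  (v a \in delta (drop_end t i0) (v i0)) = (v a \in delta t (v i0)) && (a != t i0).
Proof. by move=> i0k an i0t; rewrite !mem_delta // /drop_end eqxx; lia. Qed.

Lemma delta_drop_other t i0 w : w != v i0 -> delta (drop_end t i0) w = delta t w.
Proof.
move=> w_i0; have [[i ik wi]|off] := top_spineP w; last by rewrite !delta_off.
apply/setP => x; have [a an ->] := v_onto x; rewrite wi !mem_delta // /drop_end.
by rewrite ifN //; apply: contraNneq w_i0 => <-; rewrite wi.
Qed.

Section SegmentEnds.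
Variables (p : nat) (d : {ffun V -> {set V}}).
Hypothesis orn_d : ornamentation r par d.
Hypothesis d_ends : forall i, i <= k -> i < seg_end p i -> v (seg_end p i) \in d (v i).

Lemma delta_sub_step i : i <= k ->
    (i < k -> delta (seg_end p) (v i.+1) \subset d (v i.+1)) ->
  delta (seg_end p) (v i) \subset d (v i).
Proof.
move=> ik IHi; have km := k_lt_m; have mkn := m_k_le_n.
apply/subsetP => x; have [a an ->] := v_onto x; rewrite mem_delta //.
case/orP => [/eqP ->|/andP [ia a_end]]; first exact: (orn_mem_self orn_d).
set e := seg_end p i in a_end; have ie : i < e by lia.
have de := d_ends ik ie; have en : e < n by rewrite /e /seg_end; lia.
have [em|me] := ltnP e m.
  by apply: (orn_mem_sep tree orn_d de); rewrite anc_spine //; lia.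
have d_i1 : v i.+1 \in d (v i).
  apply: (orn_mem_sep tree orn_d de (low_index_anc_spine me _)); first by rewrite /e /seg_end; lia.
  by rewrite anc_spine //; lia.
have [->|a_e] := eqVneq a e; first exact: de.
have [->|a_i1] := eqVneq a i.+1; first exact: d_i1.
apply: subsetP (orn_sub_of_mem tree orn_d d_i1) _ _.
have ik1 : i < k by move: me; rewrite /e /seg_end; lia.
apply: subsetP (IHi ik1) _ _; rewrite mem_delta //.
by move: a_e a_end; rewrite /e /seg_end; lia.
Qed.

Lemma delta_sub_of_ends w : delta (seg_end p) w \subset d w.
Proof.
have [[i ik ->]|off] := top_spineP w; last by rewrite delta_off // sub1set (orn_mem_self orn_d).
move Es : (k - i) => s; elim: s i Es ik => [|s IHs] i Es ik; apply: delta_sub_step => // ik'.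
  by lia.
by apply: IHs; lia.
Qed.

End SegmentEnds.

Lemma orn_between_drop t i0 e : i0 <= k -> i0 < t i0 ->
    orn_le (delta (drop_end t i0)) e -> orn_le e (delta t) ->
  e = delta (drop_end t i0) \/ e = delta t.
Proof.
move=> i0k i0t /forallP drop_e /forallP e_t.
have other w : w != v i0 -> e w = delta t w.
  by move=> w_i0; apply/eqP; rewrite eqEsubset e_t -(delta_drop_other _ w_i0) drop_e.
suff [at_i0|at_i0] : e (v i0) = delta (drop_end t i0) (v i0) \/ e (v i0) = delta t (v i0).
- left; apply/ffunP => w; have [->|w_i0] := eqVneq w (v i0); first exact: at_i0.
  by rewrite other // delta_drop_other.
- right; apply/ffunP => w; have [->|w_i0] := eqVneq w (v i0); first exact: at_i0.
  exact: other.
have [end_e|end_e] := boolP (v (t i0) \in e (v i0)); [right|left]; apply/eqP; rewrite eqEsubset.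
- rewrite e_t /=; apply/subsetP => x; have [a an ->] := v_onto x => dx.
  have [a_end|a_end] := eqVneq a (t i0); first by rewrite a_end.
  by apply: subsetP (drop_e _) _ _; rewrite mem_delta_drop // dx.
- rewrite drop_e andbT; apply/subsetP => x; have [a an ->] := v_onto x => ex.
  rewrite mem_delta_drop // (subsetP (e_t _)) //=.
  by apply: contraNneq end_e => <-.
Qed.

Lemma seg_end_lt_n p i : seg_end p i < n.
Proof. by rewrite /seg_end; have := m_k_le_n; have := two_le_m; lia. Qed.

Lemma delta_drop_covby p i0 : i0 <= k -> i0 < seg_end p i0 ->
  orn_covby r par (delta (drop_end (seg_end p) i0)) (delta (seg_end p)).
Proof.
move=> i0k i0t; set t := seg_end p.
have drop_le : orn_le (delta (drop_end t i0)) (delta t).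
  apply/forallP => w; apply: delta_mono => i _.
  by rewrite /drop_end; case: eqP => // _; apply: leq_pred.
have drop_neq : delta (drop_end t i0) != delta t.
  apply/eqP => /ffunP /(_ (v i0)) drop_t.
  have end_t : v (t i0) \in delta t (v i0) by rewrite mem_delta ?seg_end_lt_n // i0t leqnn orbT.
  by rewrite -drop_t mem_delta_drop ?seg_end_lt_n // eqxx andbF in end_t.
apply/and4P; split; [exact: delta_drop_end_orn | exact: delta_seg_end_orn | |].
  by rewrite /orn_lt drop_le.
apply/existsP => -[e /and3P [_ /andP [le1 ne1] /andP [le2 ne2]]].
by case: (orn_between_drop i0k i0t le1 le2) => e_eq; rewrite e_eq eqxx in ne1 ne2.
Qed.

Lemma covby_delta_ge p d : orn_covby r par d (delta (seg_end p)) ->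
  forall w, delta (seg_end p.+1) w \subset d w.
Proof.
case/and4P => orn_d _ /andP [/forallP d_le d_neq] /existsPn no_between w.
have le_succ t : (forall i, i <= k -> seg_end p.+1 i <= t i) ->
    delta t w \subset d w -> delta (seg_end p.+1) w \subset d w.
  by move=> le_t; apply: subset_trans (delta_mono _ le_t).
have [/existsP [i0 /andP [i0t end_d]]|all_ends] :=
  boolP [exists i0 : 'I_k.+1, (i0 < seg_end p i0) && (v (seg_end p i0) \notin d (v i0))].
  have i0k : i0 <= k by rewrite -ltnS; exact: ltn_ord.
  have d_drop : orn_le d (delta (drop_end (seg_end p) i0)).
    apply/forallP => u; have [->|u_i0] := eqVneq u (v i0); last by rewrite delta_drop_other.
    apply/subsetP => x dx; have [a an xa] := v_onto x; rewrite xa in dx *.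
    rewrite mem_delta_drop // (subsetP (d_le _)) //=.
    by apply: contraNneq end_d => <-.
  have /and4P [_ _ drop_lt _] := delta_drop_covby i0k i0t.
  have d_eq : d = delta (drop_end (seg_end p) i0).
    have := no_between (delta (drop_end (seg_end p) i0)).
    by rewrite delta_drop_end_orn drop_lt /orn_lt d_drop !andbT /= negbK => /eqP.
  apply: (le_succ (drop_end (seg_end p) i0)); last by rewrite d_eq.
  by move=> i _; rewrite /drop_end /seg_end; case: eqP; lia.
apply: (le_succ (seg_end p)); first by move=> i _; rewrite /seg_end; lia.
apply: (delta_sub_of_ends orn_d) => i ik it; apply: contraNT all_ends => end_d.
by rewrite -ltnS in ik; apply/existsP; exists (Ordinal ik); rewrite it.
Qed.

Lemma Pop_delta p : Pop r par (delta (seg_end p)) = delta (seg_end p.+1).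
Proof.
apply/ffunP => w; rewrite ffunE; apply/eqP; rewrite eqEsubset; apply/andP; split; last first.
  rewrite subsetI delta_mono => [|i _]; last by rewrite /seg_end; lia.
  by apply/bigcapsP => d /covby_delta_ge; apply.
have [[i ik ->]|off] := top_spineP w; last by rewrite !delta_off // subsetIl.
apply/subsetP => x; have [a an ->] := v_onto x; rewrite inE !mem_delta // => /andP [].
case/orP => [/eqP ->|/andP [ia a_end]]; first by rewrite eqxx.
have [a_e|a_e] := eqVneq a (seg_end p i); last by move=> _; rewrite /seg_end in a_e a_end *; lia.
subst a; move=> /bigcapP /(_ _ (delta_drop_covby ik ia)).
by rewrite mem_delta_drop // eqxx andbF.
Qed.

Lemma iter_Pop_delta p : iter p (Pop r par) (delta (seg_end 0)) = delta (seg_end p).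
Proof. by elim: p => //= p ->; rewrite Pop_delta. Qed.

Definition dagger : {ffun V -> {set V}} :=
  [ffun u => if [exists i : 'I_k.+1, v i == u]
             then [set x | [exists i : 'I_k.+1, exists j : 'I_n,
                      [&& v i == u, x == v j & i <= j <= m + k - 1 - i]]]
             else [set u]].

Lemma dagger_delta : dagger = delta (seg_end 0).
Proof.
apply/ffunP => u; rewrite ffunE; case: ifP => [/existsP [i /eqP <-]|none].
  have ik : i <= k by rewrite -ltnS; exact: ltn_ord.
  apply/setP => x; have [a an ->] := v_onto x; rewrite mem_delta // inE /seg_end.
  apply/existsP/idP => [[i' /existsP [j /and3P [/eqP vi' /eqP vj ij]]]|a_in].
    have i'k : i' <= k by rewrite -ltnS; exact: ltn_ord.
    rewrite -(v_inj (top_lt_n i'k) (top_lt_n ik) vi') (v_inj an (ltn_ord j) vj) in ij *.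
    lia.
  exists i; apply/existsP; exists (Ordinal an); rewrite !eqxx /=.
  by have := k_lt_m; lia.
rewrite delta_off // => i ik; apply: contraFneq none => <-; rewrite -ltnS in ik.
by apply/existsP; exists (Ordinal ik).
Qed.

Lemma iter_Pop_dagger i p : i <= k ->
  iter p (Pop r par) dagger (v i) =
    v i |: [set x | [exists j : 'I_n, (x == v j) && (i.+1 <= j <= m + k - 1 - i - p)]].
Proof.
move=> ik; rewrite dagger_delta iter_Pop_delta; apply/setP => x.
have [a an ->] := v_onto x; have i_n := top_lt_n ik.
rewrite mem_delta // !inE eq_v //; congr orb.
apply/idP/existsP => [a_in|[j /andP [/eqP /(v_inj an (ltn_ord j)) -> j_in]]].
  by exists (Ordinal an); rewrite eqxx /=; move: a_in; rewrite /seg_end; lia.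
by move: j_in; rewrite /seg_end; lia.
Qed.

End Spine.

Theorem lemma3p2 (V : finType) (r : V) (par : V -> V)
  (Htree : rooted_tree r par) (Hn : 2 <= #|V|)
  (Cs : {set V}) (HCs : maxchain r par Cs)
  (Hmax : forall C, maxchain r par C ->
     #|C| + fC r par C r <= #|Cs| + fC r par Cs r)
  (v : nat -> V)
  (Hinj : forall a b, a < #|V| -> b < #|V| -> v a = v b -> a = b)
  (Hv0 : v 0 = r)
  (HvC : forall i, i < #|Cs| -> v i \in Cs)
  (HvP : forall i, i.+1 < #|Cs| -> par (v i.+1) = v i)
  (Hlin : forall a b i j,
     #|Cs| <= a < #|V| -> #|Cs| <= b < #|V| ->
     i.+1 < #|Cs| -> j.+1 < #|Cs| ->
     v a \in Bset par Cs v i -> v b \in Bset par Cs v j ->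
     (j < i) || ((i == j) && anc par (v b) (v a)) ->
     a <= b) :
  let m := #|Cs| in
  let k := fC r par Cs r in
  let dagger : {ffun V -> {set V}} :=
    [ffun u => if [exists i : 'I_k.+1, v i == u]
               then [set x | [exists i : 'I_k.+1, exists j : 'I_#|V|,
                        [&& v i == u, x == v j & i <= j <= m + k - 1 - i]]]
               else [set u]] in
  forall i p : nat, i <= k ->
    iter p (Pop r par) dagger (v i) =
      v i |: [set x | [exists j : 'I_#|V|,
                 (x == v j) && (i.+1 <= j <= m + k - 1 - i - p)]].
Proof.
move=> m k dagger i p ik.
exact: (iter_Pop_dagger Htree Hn HCs Hinj Hv0 HvC HvP Hlin p ik).
Qed.
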